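(* Haechi (described in the context) provides finalization fairness for a sharded system: for any order-sensitive contract $\epsilon$ and any two transactions $TX^1_{\mapsto\epsilon_1}$, $TX^2_{\mapsto\epsilon_2}$ with $\epsilon\in\Upsilon(TX^1_{\mapsto\epsilon_1})\cap\Upsilon(TX^2_{\mapsto\epsilon_2})$, if $TX^1_{\mapsto\epsilon_1}\prec_{\mathbf P} TX^2_{\mapsto\epsilon_2}$ then $TX^1_{\mapsto\epsilon_1}\prec_{\mathbf E} TX^2_{\mapsto\epsilon_2}$.
   Context: Setting. A sharded blockchain has shards $S_1,\dots,S_m$, each running a BFT consensus with fewer than one third Byzantine nodes, plus a beacon shard $S_0$ maintaining a beacon chain. Shard $S_i$ maintains a chain $SC_i$, $SC_i^h$ being its block at height $h$; each block carries a publicly verifiable block timestamp $f_{bt}(\cdot)$, strictly increasing with height within a shard; $f_{idx}(\cdot)$ gives a transaction's index in its block. $TX_{\mapsto\epsilon}$ denotes a transaction calling contract $\epsilon$; $\Upsilon(TX_{\mapsto\epsilon})$ is the set of contracts called when executing $\epsilon$, and $TX_{\mapsto\epsilon,\epsilon_k}$ the sub-transaction calling $\epsilon_k$. Processing order: $TX^1\prec_{\mathbf P}TX^2$ if (i) both are in the same block and $f_{idx}(TX^1)<f_{idx}(TX^2)$, or (ii) $TX^1\in SC_i^m$, $TX^2\in SC_i^n$ with $m<n$, or (iii) $TX^1\in SC_i^m$, $TX^2\in SC_j^n$ with $f_{bt}(SC_i^m)<f_{bt}(SC_j^n)$. Execution order: $TX^1_{\mapsto\epsilon_1}\prec_{\mathbf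 E}TX^2_{\mapsto\epsilon_2}$ if for every $\epsilon_k\in\Upsilon(TX^1_{\mapsto\epsilon_1})\cap\Upsilon(TX^2_{\mapsto\epsilon_2})$ the sub-transaction $TX^1_{\mapsto\epsilon_1,\epsilon_k}$ is executed before $TX^2_{\mapsto\epsilon_2,\epsilon_k}$. Haechi protocol for order-sensitive-contract transactions (OTXs): (1) Processing: a sender shard processes an OTX (e.g. withdraws the sender's funds) in a block, and for each block at height $h$ sends the beacon chain a certified CrossLink $\langle blockTS, L_{tx}, i, h\rangle$ containing the block's valid new OTXs in block order. (2) Ordering: the beacon chain keeps, for each shard $i$, a sequence $shardCLs[i]$ of received CrossLinks of consecutive heights (out-of-order ones buffered), and $shardLastTS[i]$, the timestamp of its last element; once all $shardCLs[i]$ are nonempty, it selects the CrossLinks with $blockTS\le\min_i shardLastTS[i]$ and orders their OTXs by block timestamp, then by index in the CrossLink, agreeing on this via BFT consensus, and sends to each contract shard the ordered list of OTXs calling its contracts. (3) Execution: contract shards execute the called contracts in the received order. (4) Commitment: the sender shard commits or aborts each OTX based on execution results and notifies involved shards. *)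

From mathcomp Require Import all_boot.
Set Implicit Arguments. Unset Strict Implicit. Unset Printing Implicit Defensive.

(* A block of a shard chain: its (publicly verifiable) block timestamp f_bt
   and its transactions, in block order (position = f_idx). *)
Record block (Tx : Type) := Block { bts : nat; btxs : seq Tx }.

Record crosslink (Tx : Type) (m : nat) :=
  CL { cl_ts : nat; cl_txs : seq Tx; cl_shard : 'I_m; cl_h : nat }.

(* Beacon-chain state: for each shard, the heights of the CrossLinks received
   so far (including buffered out-of-order ones), and the heights whose
   CrossLinks have already been ordered. *)
Record bstate (m : nat) :=
  BS { recv : 'I_m -> seq nat; ordd : 'I_m -> seq nat }.

Section Haechi.
Variables (Tx Ct : eqType) (m : nat).
(* Ups tx = Upsilon(tx): contracts called when executing tx;
   os = the order-sensitive contracts. *)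
Variables (Ups : Tx -> seq Ct) (os : pred Ct).
(* C i = the chain SC_i of shard S_i; (C i)`_h is SC_i^h. *)
Variable C : 'I_m -> seq (block Tx).

Definition OTX (tx : Tx) : bool := has os (Ups tx).

Definition blk (i : 'I_m) (h : nat) : block Tx := nth (Block 0 [::]) (C i) h.

Definition at_pos (tx : Tx) (i : 'I_m) (h k : nat) : bool :=
  [&& h < size (C i), k < size (btxs (blk i h)) & nth tx (btxs (blk i h)) k == tx].

Definition precP (tx1 tx2 : Tx) : Prop :=
  exists (i1 : 'I_m) h1 k1 (i2 : 'I_m) h2 k2,
    at_pos tx1 i1 h1 k1 /\ at_pos tx2 i2 h2 k2 /\
    [\/ [/\ i1 = i2, h1 = h2 & k1 < k2],
        (i1 = i2 /\ h1 < h2)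
      | bts (blk i1 h1) < bts (blk i2 h2)].

Definition mkCL (i : 'I_m) (h : nat) : crosslink Tx m :=
  CL (bts (blk i h)) [seq tx <- btxs (blk i h) | OTX tx] i h.

(* Number of consecutive heights 0,1,.. received. *)
Definition prefix_len (s : seq nat) : nat :=
  find (fun n => n \notin s) (iota 0 (size s).+1).

Definition shardCLs (st : bstate m) (i : 'I_m) : seq nat :=
  [seq h <- iota 0 (prefix_len (recv st i)) | h \notin ordd st i].

Definition ready (st : bstate m) : bool :=
  all (fun i => shardCLs st i != [::]) (enum 'I_m).

Definition lastTS (st : bstate m) (i : 'I_m) : nat :=
  bts (blk i (last 0 (shardCLs st i))).

Definition thr (st : bstate m) : nat :=
  foldr minn (\max_(i < m) lastTS st i) [seq lastTS st i | i <- enum 'I_m].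

Definition selected (st : bstate m) (i : 'I_m) : seq nat :=
  [seq h <- shardCLs st i | bts (blk i h) <= thr st].

Definition cl_items (c : crosslink Tx m) : seq (nat * nat * Tx) :=
  [seq (cl_ts c, kt.1, kt.2) | kt <- zip (iota 0 (size (cl_txs c))) (cl_txs c)].

Definition key_le (a b : nat * nat * Tx) : bool :=
  (a.1.1 < b.1.1) || ((a.1.1 == b.1.1) && (a.1.2 <= b.1.2)).

Definition batch (st : bstate m) : seq Tx :=
  [seq x.2 | x <- sort key_le
     (flatten [seq flatten [seq cl_items (mkCL i h) | h <- selected st i]
              | i <- enum 'I_m])].

Definition init_state : bstate m := BS (fun _ => [::]) (fun _ => [::]).

(* Arrival of the CrossLink of SC_i^h at the beacon chain; then, if all
   shardCLs[i] are nonempty, one ordering round. *)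
Definition step (so : bstate m * seq Tx) (a : 'I_m * nat) : bstate m * seq Tx :=
  let st1 := BS (fun j => if j == a.1 then a.2 :: recv so.1 j else recv so.1 j)
                (ordd so.1) in
  if ready st1 then
    (BS (recv st1) (fun j => selected st1 j ++ ordd st1 j), so.2 ++ batch st1)
  else (st1, so.2).

Definition run (arr : seq ('I_m * nat)) : seq Tx := (foldl step (init_state, [::]) arr).2.

(* Execution sequence of the sub-transactions calling contract eps on its
   contract shard: the received ordered list of OTXs calling eps. *)
Definition exec (arr : seq ('I_m * nat)) (eps : Ct) : seq Tx :=
  [seq tx <- run arr | eps \in Ups tx].

End Haechi.

From Pilot Require Import Defs.
From mathcomp Require Import all_boot.
Set Implicit Arguments. Unset Strict Implicit. Unset Printing Implicit Defensive.

(* The beacon chain's global order grows by appending sorted batches. Along a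
   run it stays duplicate-free, consists exactly of the OTXs of the blocks
   already ordered, and lists tx1 before tx2 whenever tx1 precedes tx2 in
   processing order and tx2 has been output. A batch only takes CrossLinks with
   blockTS at most min_i shardLastTS[i]; since each shard's CrossLinks are taken
   in height order and timestamps increase with height, a block that precedes a
   block of the batch is either already ordered or in the same batch, and
   sorting the batch by (blockTS, index) respects processing order. Restricting
   the global order to the transactions calling eps keeps relative positions. *)

Section FlattenUniq.
Variables (A B : eqType) (f : A -> seq B).

Lemma flatten_map_uniq_mem s a :
  uniq (flatten [seq f x | x <- s]) -> a \in s -> uniq (f a).
Proof.
elim: s => [|c s IH] //= /[!cat_uniq] /and3P[uc _ us].
by rewrite inE => /predU1P[->|/IH->].
Qed.

Lemma flatten_map_uniq_inj s a b z :
  uniq (flatten [seq f x | x <- s]) -> a \in s -> b \in s ->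
  z \in f a -> z \in f b -> a = b.
Proof.
elim: s => [|c s IH] //= /[!cat_uniq] /and3P[_ dc us].
have disj x : x \in s -> z \in f x -> z \notin f c.
  move=> xs zx; apply: contra dc => zc; apply/hasP; exists z => //.
  by apply/flatten_mapP; exists x.
rewrite !inE => /predU1P[->|as_] /predU1P[->|bs] za zb //.
- by rewrite (negbTE (disj _ bs zb)) in za.
- by rewrite (negbTE (disj _ as_ za)) in zb.
- exact: IH.
Qed.

Lemma flatten_map_uniq s :
  uniq s -> (forall x, x \in s -> uniq (f x)) ->
  (forall x y z, x \in s -> y \in s -> z \in f x -> z \in f y -> x = y) ->
  uniq (flatten [seq f x | x <- s]).
Proof.
elim: s => [|c s IH] //= /andP[cs us] uf inj.
rewrite cat_uniq uf ?mem_head //= IH //; last 2 first.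
- by move=> x xs; apply: uf; rewrite inE xs orbT.
- by move=> x y z xs ys; apply: inj; rewrite inE ?xs ?ys orbT.
rewrite andbT; apply/hasP => -[z /flatten_mapP[x xs zx] zc].
by move: cs; rewrite (inj c x z) ?mem_head ?inE ?xs ?orbT.
Qed.

End FlattenUniq.

Lemma index_filter_lt (T : eqType) (p : pred T) (s : seq T) x y :
  uniq s -> x \in filter p s -> y \in filter p s -> index x s < index y s ->
  index x (filter p s) < index y (filter p s).
Proof.
elim: s => [|z s IH] //= /andP[zs us].
have out_s w : w \in filter p s -> z != w.
  by rewrite mem_filter => /andP[_ ws]; apply: contraNneq zs => ->.
case: (eqVneq z y) => [<-|zy]; first by rewrite ltn0 => _ _.
case: (eqVneq z x) => [<-|zx].
  case: (p z) => /=; first by rewrite eqxx (negbTE zy).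
  by move=> /out_s; rewrite eqxx.
rewrite ltnS; case: (p z) => /=; last exact: IH.
by rewrite !inE ![_ == z]eq_sym (negbTE zx) (negbTE zy); exact: IH.
Qed.

Lemma index_map_uniq (A B : eqType) (f : A -> B) (s : seq A) x :
  uniq (map f s) -> x \in s -> index (f x) (map f s) = index x s.
Proof.
move=> fs_uniq xs; rewrite -{1}(nth_index x xs) -(nth_map x (f x)) ?index_mem //.
by rewrite index_uniq // size_map index_mem.
Qed.

Lemma index_catl_lt (T : eqType) (s1 s2 : seq T) x y :
  y \in s1 -> index x s1 < index y s1 -> index x (s1 ++ s2) < index y (s1 ++ s2).
Proof.
move=> ys1 lt_xy; have xs1 : x \in s1 by rewrite -index_mem (ltn_trans lt_xy) ?index_mem.
by rewrite !index_cat xs1 ys1.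
Qed.

Lemma index_catr_lt (T : eqType) (s1 s2 : seq T) x y :
  y \notin s1 -> (x \in s1) || (index x s2 < index y s2) ->
  index x (s1 ++ s2) < index y (s1 ++ s2).
Proof.
move=> /negbTE ys1 xs1_or_lt; rewrite !index_cat ys1.
case: ifP => xs1; first by apply: ltn_addr; rewrite index_mem.
by rewrite ltn_add2l; rewrite xs1 in xs1_or_lt.
Qed.

Lemma foldr_minn_leq (d : nat) (s : seq nat) x : x \in s -> foldr minn d s <= x.
Proof.
elim: s => [|c s IH] //=; rewrite inE => /predU1P[->|/IH]; first exact: geq_minl.
exact/leq_trans/geq_minr.
Qed.

Lemma mem_zip_iota_index (T : eqType) (s : seq T) x :
  x \in s -> (index x s, x) \in zip (iota 0 (size s)) s.
Proof.
move=> xs; have lt_xs : index x s < size (zip (iota 0 (size s)) s).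
  by rewrite size_zip size_iota minnn index_mem.
have := mem_nth (0, x) lt_xs.
by rewrite nth_zip ?size_iota // nth_iota ?index_mem // nth_index.
Qed.

Lemma key_le_refl {T : eqType} : reflexive (@key_le T).
Proof. by move=> [[a b] x]; rewrite /key_le /= eqxx leqnn orbT. Qed.

Lemma key_le_trans {T : eqType} : transitive (@key_le T).
Proof.
move=> [[b bi] y] [[a ai] x] [[c ci] z]; rewrite /key_le /=.
case/orP=> [lt_ab|/andP[/eqP-> le_ai]] /orP[lt_bc|/andP[/eqP<- le_ic]].
- by rewrite (ltn_trans lt_ab lt_bc).
- by rewrite lt_ab.
- by rewrite lt_bc.
- by rewrite eqxx (leq_trans le_ai le_ic) orbT.
Qed.

Lemma key_le_total {T : eqType} : total (@key_le T).
Proof.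
move=> [[a b] x] [[c d] y]; rewrite /key_le /=.
by case: (ltngtP a c) => //= _; rewrite leq_total.
Qed.

Lemma cl_items_txs (T : eqType) m (c : crosslink T m) :
  [seq x.2 | x <- cl_items c] = cl_txs c.
Proof. by rewrite /cl_items -map_comp; apply: unzip2_zip; rewrite size_iota. Qed.

Section Haechi.
Variables (Tx Ct : eqType) (m : nat) (Ups : Tx -> seq Ct) (os : pred Ct).
Variable C : 'I_m -> seq (block Tx).
Hypothesis bts_sorted : forall i : 'I_m, sorted ltn [seq bts b | b <- C i].
Hypothesis txs_uniq :
  uniq (flatten [seq flatten [seq btxs b | b <- C i] | i <- enum 'I_m]).

Local Notation blk := (blk C).
Local Notation OTX := (OTX Ups os).
Local Notation selected := (selected C).
Local Notation batch := (batch Ups os C).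
Local Notation key_le := (@key_le Tx).

Lemma mem_blk_size tx i h : tx \in btxs (blk i h) -> h < size (C i).
Proof. by rewrite /Defs.blk; case: ltnP => // le_Ch; rewrite nth_default. Qed.

Lemma blk_txs_uniq : uniq (flatten
  [seq flatten [seq btxs (blk i h) | h <- iota 0 (size (C i))] | i <- enum 'I_m]).
Proof.
suff E i : [seq btxs b | b <- C i] = [seq btxs (blk i h) | h <- iota 0 (size (C i))].
  by rewrite -(eq_map (fun i => congr1 flatten (E i))).
by rewrite -{1}(mkseq_nth (Block 0 [::]) (C i)) /mkseq -map_comp.
Qed.

Lemma mem_blk_inj tx i h i' h' :
  tx \in btxs (blk i h) -> tx \in btxs (blk i' h') -> i = i' /\ h = h'.
Proof.
move=> tx_ih tx_ih'.
have mem_shard j g : tx \in btxs (blk j g) ->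
    tx \in flatten [seq btxs (blk j h) | h <- iota 0 (size (C j))].
  move=> tx_jg; apply/flatten_mapP; exists g => //.
  by rewrite mem_iota add0n (mem_blk_size tx_jg).
have Ei := flatten_map_uniq_inj blk_txs_uniq (mem_enum _ i) (mem_enum _ i')
  (mem_shard _ _ tx_ih) (mem_shard _ _ tx_ih').
subst i'; split=> //.
have shard_uniq := flatten_map_uniq_mem blk_txs_uniq (mem_enum _ i).
apply: (flatten_map_uniq_inj shard_uniq _ _ tx_ih tx_ih').
  by rewrite mem_iota add0n (mem_blk_size tx_ih).
by rewrite mem_iota add0n (mem_blk_size tx_ih').
Qed.

Lemma blk_uniq i h : uniq (btxs (blk i h)).
Proof.
case: (ltnP h (size (C i))) => [lt_h|le_h]; last by rewrite /Defs.blk nth_default.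
apply: (flatten_map_uniq_mem (flatten_map_uniq_mem blk_txs_uniq (mem_enum _ i))).
by rewrite mem_iota add0n lt_h.
Qed.

Lemma bts_blk_lt i h1 h2 :
  h1 < h2 -> h2 < size (C i) -> bts (blk i h1) < bts (blk i h2).
Proof.
move=> lt_h12 lt_h2; have lt_h1 := ltn_trans lt_h12 lt_h2.
have := sorted_ltn_nth ltn_trans 0 (bts_sorted i); rewrite /prop_in2 => /(_ h1 h2).
rewrite !inE !size_map lt_h1 lt_h2 => /(_ isT isT lt_h12).
by rewrite !(nth_map (Block 0 [::])).
Qed.

Lemma bts_blk_leq i h1 h2 :
  h1 < size (C i) -> bts (blk i h1) <= bts (blk i h2) -> h1 <= h2.
Proof. by move=> lt_h1; apply: contraTT; rewrite -!ltnNge => /bts_blk_lt; apply. Qed.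

Definition blk_lt tx1 i1 h1 tx2 i2 h2 : Prop :=
  (i1 = i2 /\ h1 = h2 /\ index tx1 (btxs (blk i1 h1)) < index tx2 (btxs (blk i1 h1)))
  \/ bts (blk i1 h1) < bts (blk i2 h2).

(* Case (ii) of the processing order is absorbed by case (iii), since block
   timestamps increase with height. *)
Definition prec_blk tx1 tx2 : Prop := exists (i1 : 'I_m) h1 (i2 : 'I_m) h2,
  [/\ tx1 \in btxs (blk i1 h1), tx2 \in btxs (blk i2 h2) & blk_lt tx1 i1 h1 tx2 i2 h2].

Lemma at_posP tx i h k :
  at_pos C tx i h k -> tx \in btxs (blk i h) /\ index tx (btxs (blk i h)) = k.
Proof.
case/and3P=> _ lt_k /eqP tx_k.
have tx_ih : tx \in btxs (blk i h) by rewrite -tx_k mem_nth.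
by split=> //; rewrite -{1}tx_k index_uniq ?blk_uniq.
Qed.

Lemma precP_prec_blk tx1 tx2 : precP C tx1 tx2 -> prec_blk tx1 tx2.
Proof.
case=> i1 [h1 [k1 [i2 [h2 [k2 [/at_posP[tx1_ih <-] [/at_posP[tx2_ih <-] prec12]]]]]]].
exists i1, h1, i2, h2; split=> //.
case: prec12 => [[Ei Eh lt_k]|[Ei lt_h]|lt_bts]; last by right.
- by left; subst i2 h2.
- by right; subst i2; apply: bts_blk_lt (mem_blk_size tx2_ih).
Qed.

Definition selected_otxs (st : bstate m) : seq Tx := flatten
  [seq flatten [seq filter OTX (btxs (blk i h)) | h <- selected st i] | i <- enum 'I_m].

Lemma batch_perm st : perm_eq (batch st) (selected_otxs st).
Proof.
rewrite /batch; apply: perm_trans (perm_map _ (permEl (perm_sort _ _))) _.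
rewrite map_flatten -map_comp (eq_map (_ : _ =1 fun i =>
  flatten [seq filter OTX (btxs (blk i h)) | h <- selected st i])) //.
move=> i /=; rewrite map_flatten -map_comp; congr flatten.
by apply: eq_map => h /=; rewrite cl_items_txs.
Qed.

Lemma mem_selected_otxs st tx :
  reflect (exists i h, [/\ h \in selected st i, tx \in btxs (blk i h) & OTX tx])
          (tx \in selected_otxs st).
Proof.
apply: (iffP idP) => [/flatten_mapP[i _ /flatten_mapP[h hs]]|[i [h [hs tx_ih otx]]]].
  by rewrite mem_filter => /andP[otx tx_ih]; exists i, h; split.
apply/flatten_mapP; exists i; rewrite ?mem_enum //.
by apply/flatten_mapP; exists h => //; rewrite mem_filter otx.
Qed.

Lemma selected_uniq st i : uniq (selected st i).
Proof. by rewrite !filter_uniq // iota_uniq. Qed.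

Lemma selected_otxs_uniq st : uniq (selected_otxs st).
Proof.
have blk_inj_filter i h i' h' tx : tx \in filter OTX (btxs (blk i h)) ->
    tx \in filter OTX (btxs (blk i' h')) -> i = i' /\ h = h'.
  by rewrite !mem_filter => /andP[_ tx_ih] /andP[_ /(mem_blk_inj tx_ih)].
apply: flatten_map_uniq => [||i i' tx _ _]; first exact: enum_uniq.
  move=> i _; apply: flatten_map_uniq => [|h _|h h' tx _ _]; first exact: selected_uniq.
    by rewrite filter_uniq ?blk_uniq.
  by move/blk_inj_filter=> /[apply] -[].
by move=> /flatten_mapP[h _ /blk_inj_filter] + /flatten_mapP[h' _] => /[apply] -[].
Qed.

Lemma mem_batch st tx :
  reflect (exists i h, [/\ h \in selected st i, tx \in btxs (blk i h) & OTX tx])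
          (tx \in batch st).
Proof. by rewrite (perm_mem (batch_perm st)); apply: mem_selected_otxs. Qed.

Lemma batch_uniq st : uniq (batch st).
Proof. by rewrite (perm_uniq (batch_perm st)) selected_otxs_uniq. Qed.

Definition batch_items (st : bstate m) : seq (nat * nat * Tx) := flatten
  [seq flatten [seq cl_items (mkCL Ups os C i h) | h <- selected st i] | i <- enum 'I_m].

Lemma mem_batch_items st i h tx :
  h \in selected st i -> tx \in btxs (blk i h) -> OTX tx ->
  (bts (blk i h), index tx (filter OTX (btxs (blk i h))), tx) \in batch_items st.
Proof.
move=> hs tx_ih otx; apply/flatten_mapP; exists i; rewrite ?mem_enum //.
apply/flatten_mapP; exists h => //; apply/mapP.
exists (index tx (filter OTX (btxs (blk i h))), tx) => //.
by rewrite mem_zip_iota_index // mem_filter otx.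
Qed.

Lemma batch_prec st tx1 i1 h1 tx2 i2 h2 :
  h1 \in selected st i1 -> tx1 \in btxs (blk i1 h1) -> OTX tx1 ->
  h2 \in selected st i2 -> tx2 \in btxs (blk i2 h2) -> OTX tx2 ->
  blk_lt tx1 i1 h1 tx2 i2 h2 -> index tx1 (batch st) < index tx2 (batch st).
Proof.
move=> hs1 tx1_ih otx1 hs2 tx2_ih otx2 lt12.
have items_uniq : uniq [seq x.2 | x <- sort key_le (batch_items st)] by exact: batch_uniq.
have it1 := mem_batch_items hs1 tx1_ih otx1; rewrite -(mem_sort key_le) in it1.
have it2 := mem_batch_items hs2 tx2_ih otx2; rewrite -(mem_sort key_le) in it2.
rewrite /Defs.batch -/(batch_items st).
have /= -> := index_map_uniq items_uniq it1; have /= -> := index_map_uniq items_uniq it2.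
have := sorted_leq_index key_le_trans key_le_refl (sort_sorted key_le_total _) _ _ it2 it1.
rewrite ltnNge => /contraNN; apply.
rewrite /key_le /=; case: lt12 => [[Ei [Eh lt_idx]]|lt_bts].
  subst i2 h2; rewrite ltnn eqxx /= -ltnNge.
  by apply: index_filter_lt; rewrite ?mem_filter ?otx1 ?otx2 ?blk_uniq.
by rewrite negb_or -leqNgt (ltnW lt_bts) /= negb_and (gtn_eqF lt_bts).
Qed.

Lemma thr_leq st i : thr C st <= lastTS C st i.
Proof. by apply: foldr_minn_leq; apply: map_f; rewrite mem_enum. Qed.

Lemma selected_earlier st tx1 i1 h1 i2 h2 :
  ready st -> tx1 \in btxs (blk i1 h1) -> h1 \notin ordd st i1 ->
  h2 \in selected st i2 -> bts (blk i1 h1) <= bts (blk i2 h2) -> h1 \in selected st i1.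
Proof.
move=> rdy tx1_ih h1_new hs2 le_bts.
have ne : shardCLs st i1 != [::] by apply: (allP rdy); rewrite mem_enum.
have : last 0 (shardCLs st i1) \in shardCLs st i1.
  by case: (shardCLs st i1) ne => // c s _; apply: mem_last.
set l := last 0 _; rewrite mem_filter mem_iota add0n => /andP[_ lt_l].
have le_thr : bts (blk i2 h2) <= thr C st by move: hs2; rewrite mem_filter => /andP[].
have le_l : h1 <= l.
  apply: bts_blk_leq (mem_blk_size tx1_ih) (leq_trans le_bts (leq_trans le_thr _)).
  exact: thr_leq.
rewrite mem_filter (leq_trans le_bts le_thr) mem_filter h1_new mem_iota add0n.
exact: leq_ltn_trans le_l lt_l.
Qed.

Definition fair_output (so : bstate m * seq Tx) : Prop :=
  [/\ uniq so.2,
      forall tx, tx \in so.2 <->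
        exists i h, [/\ h \in ordd so.1 i, tx \in btxs (blk i h) & OTX tx]
    & forall tx1 tx2, prec_blk tx1 tx2 -> OTX tx1 -> tx2 \in so.2 ->
        index tx1 so.2 < index tx2 so.2].

Lemma fair_output_init : fair_output (init_state m, [::]).
Proof. by split=> // tx; split=> // -[i [h []]]. Qed.

Lemma fair_output_step so a : fair_output so -> fair_output (step Ups os C so a).
Proof.
case: so => st out [out_uniq mem_out out_fair]; rewrite /step /=.
set st1 := BS _ _; case: ifP => [rdy|_]; last by split.
have batch_new tx : tx \in batch st1 -> tx \notin out.
  case/mem_batch=> i [h [hs tx_ih _]]; apply/negP => /mem_out[i' [h' [ho tx_ih' _]]].
  case: (mem_blk_inj tx_ih tx_ih') => Ei Eh; subst i' h'.
  by move: hs; rewrite !mem_filter ho andbF.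
split=> /=.
- rewrite cat_uniq out_uniq batch_uniq andbT /=.
  by apply/hasP => -[tx /batch_new/negP].
- move=> tx; rewrite mem_cat; split.
    case/orP=> [/mem_out|/mem_batch] [i [h [hih tx_ih otx]]];
      by exists i, h; rewrite mem_cat hih ?orbT.
  case=> i [h []]; rewrite mem_cat => /orP[hs|ho] tx_ih otx; apply/orP.
    by right; apply/mem_batch; exists i, h.
  by left; apply/mem_out; exists i, h.
move=> tx1 tx2 prec12 otx1; rewrite mem_cat => /orP[tx2_out|tx2_batch].
  by apply: index_catl_lt => //; apply: out_fair.
apply: index_catr_lt (batch_new _ tx2_batch) _.
case: (boolP (tx1 \in out)) => //= tx1_new.
have [i2 [h2 [hs2 tx2_ih otx2]]] := mem_batch _ _ tx2_batch.
have [j1 [g1 [j2 [g2 [tx1_jg tx2_jg lt12]]]]] := prec12.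
have [Ej Eg] := mem_blk_inj tx2_jg tx2_ih; subst j2 g2.
have le_bts : bts (blk j1 g1) <= bts (blk i2 h2).
  by case: lt12 => [[-> [-> _]]|/ltnW].
have g1_new : g1 \notin ordd st1 j1.
  by apply: contra tx1_new => go; apply/mem_out; exists j1, g1.
have hs1 := selected_earlier rdy tx1_jg g1_new hs2 le_bts.
exact: batch_prec hs1 tx1_jg otx1 hs2 tx2_ih otx2 lt12.
Qed.

Lemma fair_output_foldl arr so :
  fair_output so -> fair_output (foldl (step Ups os C) so arr).
Proof. by elim: arr so => //= a arr IH so /(fair_output_step a)/IH. Qed.

End Haechi.

Theorem theorem1 (Tx Ct : eqType) (m : nat) (Ups : Tx -> seq Ct) (os : pred Ct)
    (C : 'I_m -> seq (block Tx)) (arr : seq ('I_m * nat)) (eps : Ct) (tx1 tx2 : Tx) :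
  (forall i : 'I_m, sorted ltn [seq bts b | b <- C i]) ->
  uniq (flatten [seq flatten [seq btxs b | b <- C i] | i <- enum 'I_m]) ->
  (forall a, a \in arr -> a.2 < size (C a.1)) ->
  os eps -> eps \in Ups tx1 -> eps \in Ups tx2 ->
  precP C tx1 tx2 ->
  tx2 \in exec Ups os C arr eps ->
  index tx1 (exec Ups os C arr eps) < index tx2 (exec Ups os C arr eps).
Proof.
move=> bts_sorted txs_uniq _ os_eps eps_tx1 eps_tx2 prec12 tx2_exec.
have [run_uniq _ run_fair] :=
  fair_output_foldl bts_sorted txs_uniq arr (fair_output_init Ups os C).
have otx1 : OTX Ups os tx1 by apply/hasP; exists eps.
have tx2_run : tx2 \in run Ups os C arr by move: tx2_exec; rewrite mem_filter => /andP[].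
have lt12 := run_fair _ _ (precP_prec_blk bts_sorted txs_uniq prec12) otx1 tx2_run.
have tx1_run : tx1 \in run Ups os C arr by rewrite -index_mem (ltn_trans lt12) ?index_mem.
by apply: index_filter_lt; rewrite ?mem_filter ?eps_tx1 ?eps_tx2.
Qed.
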